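(* Let $SO$ be a semi-overlap function and let $I_{SO}(u,v)=\sup\{w\in[0,1]\mid SO(u,w)\le v\}$ be its residual implication, assumed to be a fuzzy implication. Then: (1) $SO(u,v)=\min\{w\in[0,1]\mid I_{SO}(u,w)\ge v\}$ for all $u,v\in[0,1]$. (2) $I_{SO}$ satisfies (NP) if and only if $1$ is the neutral element of $SO$. (3) $I_{SO}$ satisfies (EP) if and only if $SO$ is associative. (4) $I_{SO}$ satisfies (IP) if and only if $SO(u,1)\le u$ for all $u\in[0,1]$. (5) $I_{SO}$ satisfies (LOP) if and only if $SO(u,1)\le u$ for all $u\in[0,1]$. (6) $I_{SO}$ satisfies (ROP) if and only if $SO(u,1)\ge u$ for all $u\in[0,1]$. (7) $I_{SO}$ satisfies (OP) if and only if $1$ is the neutral element of $SO$. (8) $I_{SO}$ satisfies (CB) if and only if $SO(u,v)\le\min\{u,v\}$ for all $u,v\in[0,1]$. (9) If $I_{SO}$ satisfies (CB), then $I_{SO}$ satisfies (SIB). (10) If $SO(u,v)=\min\{u,v\}$ for all $u,v$, then $I_{SO}$ satisfies (IB). (11) If $SO$ has $1$ as neutral element, then $I_{SO}$ satisfies (CB).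
   Context: A semi-overlap function is a function $SO:[0,1]^2\to[0,1]$ such that for all $u,v\in[0,1]$: (S1) $SO(u,v)=SO(v,u)$; (S2) if $uv=0$ then $SO(u,v)=0$; (S3) if $uv=1$ then $SO(u,v)=1$; (S4) $SO$ is increasing in each variable; (S5) $SO$ is left-continuous, meaning that for every $u\in[0,1]$ and every nonempty family $\{v_i\mid i\in I\}\subseteq[0,1]$, $SO(u,\sup_{i\in I}v_i)=\sup_{i\in I}SO(u,v_i)$. $1$ is the neutral element of $SO$ if $SO(1,v)=v$ for all $v$. A fuzzy implication is a function $I:[0,1]^2\to[0,1]$ such that: $u\le v$ implies $I(v,w)\le I(u,w)$; $v\le w$ implies $I(u,v)\le I(u,w)$; $I(0,0)=1$; $I(1,1)=1$; $I(1,0)=0$. For a fuzzy implication $I$ (all quantifiers over $[0,1]$): (NP) $I(1,v)=v$; (LOP) $u\le v\Rightarrow I(u,v)=1$; (ROP) $I(u,v)=1\Rightarrow u\le v$; (OP) $u\le v\Leftrightarrow I(u,v)=1$; (EP) $I(u,I(v,w))=I(v,I(u,w))$; (IP) $I(u,u)=1$; (CB) $v\le I(u,v)$; (SIB) $I(u,v)\le I(u,I(u,v))$; (IB) $I(u,v)=I(u,I(u,v))$. *)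

From mathcomp Require Import all_boot all_order all_algebra.
From mathcomp Require Import all_classical all_reals.
Set Implicit Arguments. Unset Strict Implicit. Unset Printing Implicit Defensive.
Import Order.TTheory GRing.Theory Num.Theory.
Local Open Scope ring_scope.
Local Open Scope classical_set_scope.

Section Fuzzy.
Variable R : realType.

Definition in01 (x : R) : Prop := 0 <= x <= 1.

(* A binary operation on [0,1], represented as a function R -> R -> R
   considered only on [0,1]^2. *)
Definition maps01 (F : R -> R -> R) : Prop :=
  forall u v, in01 u -> in01 v -> in01 (F u v).

Definition semi_overlap (SO : R -> R -> R) : Prop :=
  maps01 SO /\
  [/\ (forall u v, in01 u -> in01 v -> SO u v = SO v u),
      (forall u v, in01 u -> in01 v -> u * v = 0 -> SO u v = 0),
      (forall u v, in01 u -> in01 v -> u * v = 1 -> SO u v = 1),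
      (forall u v w, in01 u -> in01 v -> in01 w -> v <= w ->
                  SO u v <= SO u w /\ SO v u <= SO w u) &
      (forall (u : R) (I : Type) (v : I -> R), in01 u ->
                  (exists i : I, True) -> (forall i, in01 (v i)) ->
                  SO u (sup (range v)) = sup (range (fun i => SO u (v i))))].

Definition neutral_one (SO : R -> R -> R) : Prop :=
  forall v, in01 v -> SO 1 v = v.

Definition associative01 (SO : R -> R -> R) : Prop :=
  forall u v w, in01 u -> in01 v -> in01 w -> SO u (SO v w) = SO (SO u v) w.

Definition fuzzy_implication (I : R -> R -> R) : Prop :=
  maps01 I /\
  [/\ (forall u v w, in01 u -> in01 v -> in01 w -> u <= v -> I v w <= I u w),
      (forall u v w, in01 u -> in01 v -> in01 w -> v <= w -> I u v <= I u w),
      I 0 0 = 1, I 1 1 = 1 & I 1 0 = 0].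

Definition residual (SO : R -> R -> R) (u v : R) : R :=
  sup [set w | in01 w /\ SO u w <= v].

Definition NP (I : R -> R -> R) : Prop := forall v, in01 v -> I 1 v = v.
Definition LOP (I : R -> R -> R) : Prop :=
  forall u v, in01 u -> in01 v -> u <= v -> I u v = 1.
Definition ROP (I : R -> R -> R) : Prop :=
  forall u v, in01 u -> in01 v -> I u v = 1 -> u <= v.
Definition OP (I : R -> R -> R) : Prop :=
  forall u v, in01 u -> in01 v -> (u <= v <-> I u v = 1).
Definition EP (I : R -> R -> R) : Prop :=
  forall u v w, in01 u -> in01 v -> in01 w -> I u (I v w) = I v (I u w).
Definition IP (I : R -> R -> R) : Prop := forall u, in01 u -> I u u = 1.
Definition CB (I : R -> R -> R) : Prop :=
  forall u v, in01 u -> in01 v -> v <= I u v.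
Definition SIB (I : R -> R -> R) : Prop :=
  forall u v, in01 u -> in01 v -> I u v <= I u (I u v).
Definition IB (I : R -> R -> R) : Prop :=
  forall u v, in01 u -> in01 v -> I u v = I u (I u v).

End Fuzzy.

From mathcomp Require Import all_boot all_order all_algebra.
From mathcomp Require Import all_classical all_reals.
Import Order.TTheory GRing.Theory Num.Theory.
Local Open Scope ring_scope.
Local Open Scope classical_set_scope.

(* Left-continuity makes [SO u] and [residual SO u] a Galois connection on
   [0,1]: SO(u,w) <= v iff w <= I_SO(u,v).  Since two points of [0,1] are
   equal as soon as they have the same lower (or upper) bounds there, each
   identity reduces to a chain of such adjunction steps, using in addition
   only the symmetry and monotonicity of SO. *)

Section UnitInterval.
Context {R : realType}.
Implicit Types (a b x : R) (I : R -> R -> R).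

Lemma in01_0 : in01 (0 : R). Proof. by rewrite /in01 lexx ler01. Qed.
Lemma in01_1 : in01 (1 : R). Proof. by rewrite /in01 lexx ler01. Qed.
Lemma in01_le1 {x} : in01 x -> x <= 1. Proof. by case/andP. Qed.

Lemma eq_in01_lower a b : in01 a -> in01 b ->
  (forall t, in01 t -> (t <= a) = (t <= b)) -> a = b.
Proof.
by move=> a01 b01 ab; apply/eqP; rewrite eq_le -ab // (ab b) ?lexx.
Qed.

Lemma eq_in01_upper a b : in01 a -> in01 b ->
  (forall t, in01 t -> (a <= t) = (b <= t)) -> a = b.
Proof.
by move=> a01 b01 ab; apply/eqP; rewrite eq_le ab // -(ab a) ?lexx.
Qed.

Definition left_commutative01 (F : R -> R -> R) :=
  forall u v w, in01 u -> in01 v -> in01 w -> F u (F v w) = F v (F u w).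

Lemma OP_LOP_ROP I : OP I <-> LOP I /\ ROP I.
Proof.
split=> [OPI | [LOPI ROPI] u v u01 v01]; last by split; [apply: LOPI | apply: ROPI].
by split=> u v u01 v01; have [] := OPI u v u01 v01.
Qed.

Lemma CB_SIB I : maps01 I -> CB I -> SIB I.
Proof. by move=> I01 CBI u v u01 v01; apply: CBI; last exact: I01. Qed.

End UnitInterval.

#[local] Hint Resolve in01_0 in01_1 : in01.
#[local] Hint Extern 0 (in01 _) => solve [auto with nocore in01] : core.

Section Residuation.
Context {R : realType} {SO : R -> R -> R}.
Hypothesis SOso : semi_overlap SO.

Let SO01 {u v} : in01 u -> in01 v -> in01 (SO u v) := SOso.1 u v.
Let SOC {u v} : in01 u -> in01 v -> SO u v = SO v u.
Proof. by case: SOso => _ [+ _ _ _ _]; apply. Qed.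
Let SO0 {u v} : in01 u -> in01 v -> u * v = 0 -> SO u v = 0.
Proof. by case: SOso => _ [_ + _ _ _]; apply. Qed.
Let SOle {u v w} : in01 u -> in01 v -> in01 w -> v <= w -> SO u v <= SO u w.
Proof. by case: SOso => _ [_ _ _ mono _] *; case: (mono u v w). Qed.
Let SOsup u (I : Type) (v : I -> R) : in01 u -> (exists i : I, True) ->
  (forall i, in01 (v i)) ->
  SO u (sup (range v)) = sup (range (fun i => SO u (v i))).
Proof. by case: SOso => _ [_ _ _ _ +]; apply. Qed.

Section Residual.
Variables u v : R.
Hypotheses (u01 : in01 u) (v01 : in01 v).

Let A := [set w | in01 w /\ SO u w <= v].

Let A0 : A 0.
Proof. by split=> //; rewrite SO0 ?mulr0 //; case/andP: v01. Qed.

Let A_has_sup : has_sup A.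
Proof. by split; [exists 0 | exists 1 => x [/in01_le1]]. Qed.

Lemma le_residual_of w : in01 w -> SO u w <= v -> w <= residual SO u v.
Proof. by move=> w01 uwv; apply: (sup_upper_bound A_has_sup). Qed.

Lemma residual_in01 : in01 (residual SO u v).
Proof.
apply/andP; split; first exact: le_residual_of _ A0.1 A0.2.
by apply: ge_sup; [exists 0 | move=> x [/in01_le1]].
Qed.

(* The only use of left-continuity: the supremum defining I_SO(u,v) is
   attained, i.e. it belongs to A. *)
Lemma SO_residual_le : SO u (residual SO u v) <= v.
Proof.
have rangeA : range (@sval R A) = A.
  apply/seteqP; split=> [x [[y Ay] _ <-] // | x Ax].
  by exists (exist _ x Ax).
have := @SOsup u _ (@sval R A) u01 (ex_intro _ (exist _ 0 A0) I)
  (fun i => (svalP i).1).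
rewrite /residual -/A rangeA => ->.
apply: ge_sup; first by exists (SO u 0), (exist _ 0 A0).
by move=> _ [[y Ay] _ <-]; exact: Ay.2.
Qed.

Lemma le_residual w : in01 w -> (w <= residual SO u v) = (SO u w <= v).
Proof.
move=> w01; apply/idP/idP; last exact: le_residual_of.
by move=> wr; apply: le_trans SO_residual_le; exact: SOle residual_in01 wr.
Qed.

Lemma residual_eq1 : (residual SO u v == 1) = (SO u 1 <= v).
Proof. by rewrite eq_le le_residual // (in01_le1 residual_in01). Qed.

End Residual.

#[local] Hint Resolve SO01 residual_in01 : in01.

Lemma maps01_residual : maps01 (residual SO).
Proof. exact: residual_in01. Qed.

Lemma SO_min_residual u v : in01 u -> in01 v ->
  [/\ in01 (SO u v), v <= residual SO u (SO u v) &
      forall w, in01 w -> v <= residual SO u w -> SO u v <= w].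
Proof. by move=> u01 v01; split=> [||w w01]; rewrite ?le_residual. Qed.

Lemma NP_residualE : NP (residual SO) <-> neutral_one SO.
Proof.
split=> [NPI v v01 | SO1 v v01].
- by apply: eq_in01_upper => // t t01; rewrite -le_residual ?NPI.
- by apply: eq_in01_lower => // t t01; rewrite le_residual ?SO1.
Qed.

Lemma EP_residualE : EP (residual SO) <-> left_commutative01 SO.
Proof.
split=> [EPI | SOCA] u v w u01 v01 w01.
- apply: eq_in01_upper => // t t01.
  by rewrite -!le_residual ?(EPI v u t).
- apply: eq_in01_lower => // t t01.
  by rewrite !le_residual ?(SOCA u v t).
Qed.

Lemma left_commutative01E : left_commutative01 SO <-> associative01 SO.
Proof.
split=> [SOCA | SOA] u v w u01 v01 w01.
- have uv01 := SO01 u01 v01.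
  by rewrite (SOC v01 w01) (SOCA u w v) // [RHS](SOC uv01 w01).
- by rewrite SOA // (SOC u01 v01) -SOA.
Qed.

Lemma IP_residualE : IP (residual SO) <-> forall u, in01 u -> SO u 1 <= u.
Proof.
split=> IPI u u01; first by rewrite -residual_eq1 // (IPI u u01).
by apply/eqP; rewrite residual_eq1 // IPI.
Qed.

Lemma LOP_residualE : LOP (residual SO) <-> forall u, in01 u -> SO u 1 <= u.
Proof.
split=> [LOPI u u01 | SOu1 u v u01 v01 uv].
- by rewrite -residual_eq1 // (LOPI u u).
- by apply/eqP; rewrite residual_eq1 //; exact: le_trans (SOu1 u u01) uv.
Qed.

Lemma ROP_residualE : ROP (residual SO) <-> forall u, in01 u -> u <= SO u 1.
Proof.
split=> [ROPI u u01 | SOu1 u v u01 v01 /eqP].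
- by apply: ROPI => //; apply/eqP; rewrite residual_eq1.
- by rewrite residual_eq1 //; exact: le_trans (SOu1 u u01).
Qed.

Lemma OP_residualE : OP (residual SO) <-> neutral_one SO.
Proof.
split=> [/OP_LOP_ROP[/LOP_residualE SOu1_le /ROP_residualE le_SOu1] v v01 | SO1].
  by apply/eqP; rewrite SOC // eq_le SOu1_le ?le_SOu1.
have SOu1 u : in01 u -> SO u 1 = u by move=> u01; rewrite SOC ?SO1.
apply/OP_LOP_ROP; split; [apply/LOP_residualE | apply/ROP_residualE];
  by move=> u u01; rewrite SOu1.
Qed.

Lemma CB_residualE :
  CB (residual SO) <-> forall u v, in01 u -> in01 v -> SO u v <= Order.min u v.
Proof.
split=> [CBI | SOmin] u v u01 v01.
- by rewrite le_min {1}SOC // -!le_residual ?CBI.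
- by rewrite le_residual //; move: (SOmin u v u01 v01); rewrite le_min => /andP[].
Qed.

Lemma IB_residual : (forall u t, in01 u -> in01 t -> SO u (SO u t) = SO u t) ->
  IB (residual SO).
Proof.
move=> SOuK u v u01 v01; apply: eq_in01_lower => // t t01.
by rewrite !le_residual ?SOuK.
Qed.

Lemma neutral_one_SO_le_min : neutral_one SO ->
  forall u v, in01 u -> in01 v -> SO u v <= Order.min u v.
Proof.
move=> SO1 u v u01 v01.
have SO_le_left x y : in01 x -> in01 y -> SO x y <= x.
  move=> x01 y01; apply: le_trans (SOle x01 y01 in01_1 (in01_le1 y01)) _.
  by rewrite SOC ?SO1.
by rewrite le_min SO_le_left // SOC // SO_le_left.
Qed.

End Residuation.

Theorem proposition3p10 (R : realType) (SO : R -> R -> R) :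
  semi_overlap SO -> fuzzy_implication (residual SO) ->
  (* (1) SO(u,v) = min {w in [0,1] | I_SO(u,w) >= v} *)
  (forall u v, in01 u -> in01 v ->
     [/\ in01 (SO u v), v <= residual SO u (SO u v) &
         forall w, in01 w -> v <= residual SO u w -> SO u v <= w]) /\
  (* (2) *) (NP (residual SO) <-> neutral_one SO) /\
  (* (3) *) (EP (residual SO) <-> associative01 SO) /\
  (* (4) *) (IP (residual SO) <-> forall u, in01 u -> SO u 1 <= u) /\
  (* (5) *) (LOP (residual SO) <-> forall u, in01 u -> SO u 1 <= u) /\
  (* (6) *) (ROP (residual SO) <-> forall u, in01 u -> u <= SO u 1) /\
  (* (7) *) (OP (residual SO) <-> neutral_one SO) /\
  (* (8) *) (CB (residual SO) <->
             forall u v, in01 u -> in01 v -> SO u v <= Order.min u v) /\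
  (* (9) *) (CB (residual SO) -> SIB (residual SO)) /\
  (* (10) *) ((forall u v, in01 u -> in01 v -> SO u v = Order.min u v) ->
              IB (residual SO)) /\
  (* (11) *) (neutral_one SO -> CB (residual SO)).
Proof.
move=> SOso _.
split; first exact: SO_min_residual.
split; first exact: NP_residualE.
split; first exact: iff_trans (EP_residualE SOso) (left_commutative01E SOso).
split; first exact: IP_residualE.
split; first exact: LOP_residualE.
split; first exact: ROP_residualE.
split; first exact: OP_residualE.
split; first exact: CB_residualE.
split; first exact/CB_SIB/maps01_residual.
split.
  move=> SOmin; apply: (IB_residual SOso) => u t u01 t01.
  have SOut01 : in01 (SO u t) by case: SOso => SO01 _; exact: SO01.
  by rewrite SOmin // (SOmin u t) // minA minxx.
by move=> SO1; apply/(CB_residualE SOso)/neutral_one_SO_le_min.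
Qed.
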